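(* Let $N\ge 2$ and $0<\gamma_1\le\gamma_2\le\dots\le\gamma_N$ with $\gamma_i+\frac{\gamma_i}{\gamma_i+\gamma_j}\ge 1$ for all distinct $i,j$. Among all spanning trees $T$ on $\{1,\dots,N\}$, the star $S$ centered at vertex $1$ (edges $\{1,j\}$ for $j=2,\dots,N$) maximizes $R_{\mathrm s}(T)$, and $$R_{\mathrm s}(S)=\frac{1}{2(N-1)}\log_2\!\Big(\Big(\gamma_1+\frac{\gamma_1}{\gamma_1+\gamma_N}\Big)\prod_{i=2}^{N}\Big(\gamma_i+\frac{\gamma_i}{\gamma_i+\gamma_1}\Big)\Big).$$
   Context: For distinct $i,j$ put $\varphi(i,j)=\log_2\!\big(\gamma_i+\frac{\gamma_i}{\gamma_i+\gamma_j}\big)$. For a spanning tree $T$ on $\{1,\dots,N\}$ with neighbor sets $A_i^T$, define the sum rate $$R_{\mathrm s}(T)=\frac{1}{2(N-1)}\sum_{i=1}^N \min_{j\in A_i^T}\varphi(i,j).$$ A spanning tree is called sum-rate optimal if it maximizes $R_{\mathrm s}$ over all spanning trees on $\{1,\dots,N\}$. *)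

From Stdlib Require Import Reals.
From mathcomp Require Import all_boot.
Set Implicit Arguments.
Local Open Scope R_scope. Unset Strict Implicit. Unset Printing Implicit Defensive.

(* Vertices of {1,...,N} are represented by 'I_N (paper vertex i <-> ordinal i-1);
   gamma : nat -> R, paper gamma_i = gamma (i-1). *)

Definition log2 (x : R) : R := ln x / ln 2.

Definition phi (gamma : nat -> R) (i j : nat) : R :=
  log2 (gamma i + gamma i / (gamma i + gamma j)).

Definition adj (N : nat) (E : {set {set 'I_N}}) : rel 'I_N :=
  fun x y => [set x; y] \in E.

Definition is_spanning_tree (N : nat) (E : {set {set 'I_N}}) : Prop :=
  (forall e, e \in E -> #|e| = 2%nat) /\ #|E| = N.-1 /\
  (forall x y : 'I_N, connect (adj E) x y).

Definition nbrs (N : nat) (E : {set {set 'I_N}}) (i : 'I_N) : {set 'I_N} :=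
  [set j | adj E i j].

(* minimum of f over a finite set A (0 if A is empty, which never happens for
   neighbour sets in a spanning tree with N >= 2). *)
Definition minR (N : nat) (A : {set 'I_N}) (f : 'I_N -> R) : R :=
  match [pick j in A] with
  | Some j0 => \big[Rmin/f j0]_(j in A) f j
  | None => 0
  end.

Definition sum_rate (N : nat) (gamma : nat -> R) (E : {set {set 'I_N}}) : R :=
  / (2 * INR (N.-1)) *
   \big[Rplus/0]_(i : 'I_N) minR (nbrs E i) (fun j => phi gamma i j).

Definition sum_rate_optimal (N : nat) (gamma : nat -> R) (E : {set {set 'I_N}}) : Prop :=
  is_spanning_tree E /\
  forall T : {set {set 'I_N}}, is_spanning_tree T -> sum_rate gamma T <= sum_rate gamma E.

Definition star0 (N : nat) : {set {set 'I_N}} :=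
  [set e : {set 'I_N} |
     [exists i : 'I_N, exists j : 'I_N,
        [&& val i == 0%nat, j != i & e == [set i; j]]]].

(* Write m_T(i) = min_{j ~ i} phi(i,j).  For i <> 1 the slack phi(i,1) - m_T(i) is
   nonnegative, because phi(i,.) decreases with the gamma of its second argument and
   gamma_1 is the smallest; the star has no slack and m_S(1) = phi(1,N).  It therefore
   suffices that m_T(1) <= phi(1,N) + (total slack of T).  Along the path
   1 = v_0, v_1, ..., v_k = N in T the exchange inequality
   phi(1,x) + phi(x,y) <= phi(1,y) + phi(x,1), valid as gamma_1 <= gamma_x, telescopes to
   phi(1,v_1) - phi(1,N) <= (slack along the path), and m_T(1) <= phi(1,v_1). *)

From HB Require Import structures.
From Stdlib Require Import Reals Lra Lia.
From mathcomp Require Import all_boot.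
Local Open Scope R_scope.

HB.instance Definition _ :=
  Monoid.isComLaw.Build R 0 Rplus (fun a b c => esym (Rplus_assoc a b c)) Rplus_comm Rplus_0_l.

Lemma log2_le x y : 0 < x -> x <= y -> log2 x <= log2 y.
Proof.
move=> x_gt0 /Rle_lt_or_eq_dec [lt_xy | ->]; last exact: Rle_refl.
apply: Rmult_le_compat_r; last by apply/Rlt_le/ln_increasing.
apply/Rlt_le/Rinv_0_lt_compat; rewrite -ln_1; apply: ln_increasing; lra.
Qed.

Lemma log2_mult x y : 0 < x -> 0 < y -> log2 (x * y) = log2 x + log2 y.
Proof. by move=> x_gt0 y_gt0; rewrite /log2 ln_mult //; field; apply/ln_neq_0; lra. Qed.

Lemma prod_gt0 (I : eqType) (s : seq I) (f : I -> R) :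
  {in s, forall i, 0 < f i} -> 0 < \big[Rmult/1]_(i <- s) f i.
Proof.
move=> f_gt0; rewrite big_seq.
by apply: big_ind => //; [lra | exact: Rmult_lt_0_compat].
Qed.

Lemma log2_prod (I : eqType) (s : seq I) (f : I -> R) :
  {in s, forall i, 0 < f i} ->
  log2 (\big[Rmult/1]_(i <- s) f i) = \big[Rplus/0]_(i <- s) log2 (f i).
Proof.
elim: s => [|a s IHs] f_gt0; first by rewrite !big_nil /log2 ln_1 /Rdiv Rmult_0_l.
have f_gt0_s : {in s, forall i, 0 < f i} by move=> i i_s; apply: f_gt0; rewrite inE i_s orbT.
rewrite !big_cons log2_mult ?IHs //; last exact: prod_gt0.
by apply: f_gt0; rewrite inE eqxx.
Qed.

Lemma sum_uniq_le_sum {T : finType} {P : pred T} (g : T -> R) {l : seq T} :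
  uniq l -> {subset l <= P} -> (forall i, P i -> 0 <= g i) ->
  \big[Rplus/0]_(i <- l) g i <= \big[Rplus/0]_(i | P i) g i.
Proof.
move=> l_uniq lP g_ge0.
rewrite big_uniq // [X in _ <= X](bigID (mem l)) /=.
have -> : \big[Rplus/0]_(i | P i && (i \in l)) g i = \big[Rplus/0]_(i in l) g i.
  by apply: eq_bigl => i; case: (boolP (i \in l)) => [/lP | _]; rewrite ?andbT ?andbF.
rewrite -[X in X <= _]Rplus_0_r; apply: Rplus_le_compat_l.
by apply: big_ind => //; [lra | move=> x y; lra | move=> i /andP [/g_ge0]].
Qed.

Section MinOverSet.

Context {N : nat} {A : {set 'I_N}} (f : 'I_N -> R).

Lemma minR_le {j} : j \in A -> minR A f <= f j.
Proof.
move=> jA; rewrite /minR; case: pickP => [j0 _ | A0]; last by rewrite A0 in jA.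
rewrite -big_filter; have : j \in [seq i <- index_enum _ | i \in A].
  by rewrite mem_filter jA mem_index_enum.
elim: (filter _ _) => [|a s IHs] //; rewrite in_cons big_cons => /orP [/eqP <- | js].
  exact: Rmin_l.
exact: Rle_trans (Rmin_r _ _) (IHs js).
Qed.

Lemma minR_ge c {j} : j \in A -> (forall k, k \in A -> c <= f k) -> c <= minR A f.
Proof.
move=> jA c_le; rewrite /minR; case: pickP => [j0 j0A | A0]; last by rewrite A0 in jA.
by apply: (big_ind (fun x => c <= x)) => [| x y | //]; [exact: c_le | exact: Rmin_glb].
Qed.

Lemma minR_eq {j} : j \in A -> (forall k, k \in A -> f j <= f k) -> minR A f = f j.
Proof. by move=> jA f_le; apply: Rle_antisym; [exact: minR_le | exact: minR_ge jA f_le]. Qed.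

End MinOverSet.

Lemma in_nbrs N (E : {set {set 'I_N}}) i j : (j \in nbrs E i) = adj E i j.
Proof. by rewrite inE. Qed.

Section Star.

Variable n : nat.

Lemma adj_star0 (x y : 'I_n.+2) :
  adj (star0 n.+2) x y = (x == ord0) && (y != ord0) || (y == ord0) && (x != ord0).
Proof.
rewrite /adj inE; symmetry.
apply/idP/existsP => [/orP [] /andP [/eqP -> nz] |
                      [i /existsP [j /and3P [/eqP i0 ji /eqP xy]]]].
- by exists ord0; apply/existsP; exists y; rewrite eqxx nz.
- by exists ord0; apply/existsP; exists x; rewrite setUC !eqxx nz.
have i_ord0 : i = ord0 by apply: val_inj.
subst i; have x_ij : x \in [set ord0; j] by rewrite -xy set21.
have y_ij : y \in [set ord0; j] by rewrite -xy set22.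
have ord0_xy : ord0 \in [set x; y] by rewrite xy set21.
have j_xy : j \in [set x; y] by rewrite xy set22.
move: x_ij y_ij ord0_xy j_xy; rewrite !in_set2.
case/orP=> /eqP x_eq; case/orP=> /eqP y_eq; subst => //=.
all: by rewrite ?(eq_sym ord0 j) ?(negbTE ji) ?eqxx.
Qed.

Lemma star0_spanning_tree : is_spanning_tree (star0 n.+2).
Proof.
have starE : star0 n.+2 = [set [set ord0; j] | j in [set~ (ord0 : 'I_n.+2)]].
  apply/setP => e; rewrite inE; apply/existsP/imsetP.
    case=> i /existsP [j /and3P [/eqP i0 ji /eqP ->]].
    have i_ord0 : i = ord0 by apply: val_inj.
    by subst i; exists j; rewrite ?in_setC1.
  case=> j; rewrite in_setC1 => j0 ->; exists ord0; apply/existsP; exists j.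
  by rewrite eqxx j0.
split; [|split].
- move=> e; rewrite starE => /imsetP [j]; rewrite in_setC1 => j0 ->.
  by rewrite cards2 eq_sym j0.
- rewrite starE card_in_imset ?cardsC1 ?card_ord // => j k; rewrite !in_setC1 => j0 k0 jk.
  have : j \in [set ord0; k] by rewrite -jk set22.
  by rewrite in_set2 (negbTE j0) => /eqP.
- have centre_connect (z : 'I_n.+2) :
      connect (adj (star0 n.+2)) z ord0 /\ connect (adj (star0 n.+2)) ord0 z.
    case: (eqVneq z ord0) => [-> | z0]; first by split; apply: connect0.
    by split; apply: connect1; rewrite adj_star0 eqxx z0 ?orbT.
  by move=> x y; apply: connect_trans (proj1 (centre_connect x)) (proj2 (centre_connect y)).
Qed.

End Star.

Definition psi (a b : R) : R := a + a / (a + b).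

Lemma phiE gamma i j : phi gamma i j = log2 (psi (gamma i) (gamma j)).
Proof. by []. Qed.

Lemma psi_gt0 a b : 0 < a -> 0 < b -> 0 < psi a b.
Proof. by move=> a_gt0 b_gt0; have := Rdiv_lt_0_compat a (a + b); rewrite /psi; lra. Qed.

Lemma psi_le a b c : 0 < a -> 0 < b -> b <= c -> psi a c <= psi a b.
Proof.
move=> a_gt0 b_gt0 le_bc; apply/Rplus_le_compat_l/Rmult_le_compat_l; first lra.
by apply: Rinv_le_contravar; lra.
Qed.

(* Both sides share the factor a x (1 + 1/(a+x)); what remains is 1/(x+y) <= 1/(a+y). *)
Lemma psi_exchange a x y : 0 < a -> a <= x -> 0 < y ->
  psi a x * psi x y <= psi a y * psi x a.
Proof.
move=> a_gt0 le_ax y_gt0; rewrite /psi.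
have -> : (a + a / (a + x)) * (x + x / (x + y)) =
          a * x * (1 + / (a + x)) * (1 + / (x + y)) by field; lra.
have -> : (a + a / (a + y)) * (x + x / (x + a)) =
          a * x * (1 + / (a + x)) * (1 + / (a + y)).
  by rewrite (Rplus_comm x a); field; lra.
apply: Rmult_le_compat_l.
  have := Rinv_0_lt_compat (a + x); have := Rmult_lt_0_compat a x; nra.
by apply/Rplus_le_compat_l/Rinv_le_contravar; lra.
Qed.

Section Optimality.

Variables (n : nat) (gamma : nat -> R).
Hypothesis gamma_gt0 : forall {i}, (i < n.+2)%N -> 0 < gamma i.
Hypothesis gamma_sorted : forall {i j}, (i <= j)%N -> (j < n.+2)%N -> gamma i <= gamma j.

Definition min_rate (T : {set {set 'I_n.+2}}) (i : 'I_n.+2) : R :=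
  minR (nbrs T i) (fun j => phi gamma i j).

Lemma phi_le (i j k : 'I_n.+2) : gamma j <= gamma k -> phi gamma i k <= phi gamma i j.
Proof.
move=> le_jk; have [[gi gj] gk] :=
  (gamma_gt0 (ltn_ord i), gamma_gt0 (ltn_ord j), gamma_gt0 (ltn_ord k)).
by rewrite !phiE; apply: log2_le; [exact: psi_gt0 | exact: psi_le].
Qed.

Lemma phi_exchange (x y : 'I_n.+2) :
  phi gamma 0 x + phi gamma x y <= phi gamma 0 y + phi gamma x 0.
Proof.
have [[g0 gx] gy] := (gamma_gt0 (ltn0Sn n.+1), gamma_gt0 (ltn_ord x), gamma_gt0 (ltn_ord y)).
rewrite !phiE -!log2_mult; try exact: psi_gt0.
apply: log2_le; first by apply: Rmult_lt_0_compat; apply: psi_gt0.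
exact: psi_exchange (gamma_sorted (leq0n x) (ltn_ord x)) gy.
Qed.

Lemma min_rate_star0 (i : 'I_n.+2) :
  min_rate (star0 n.+2) i = if i == ord0 then phi gamma 0 n.+1 else phi gamma i 0.
Proof.
rewrite /min_rate; case: (eqVneq i ord0) => [-> | i0].
  have max_nbr : ord_max \in nbrs (star0 n.+2) ord0 by rewrite in_nbrs adj_star0.
  apply: minR_eq max_nbr _ => k _; apply: phi_le.
  exact: gamma_sorted (leq_ord k) (ltn_ord ord_max).
have ord0_nbr : ord0 \in nbrs (star0 n.+2) i by rewrite in_nbrs adj_star0 eqxx i0 orbT.
apply: minR_eq ord0_nbr _ => k; rewrite in_nbrs adj_star0 (negbTE i0) /=.
by case/andP=> /eqP -> _; apply: Rle_refl.
Qed.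

Lemma sum_min_rate_star0 :
  \big[Rplus/0]_i min_rate (star0 n.+2) i =
  phi gamma 0 n.+1 + \big[Rplus/0]_(i : 'I_n.+2 | i != ord0) phi gamma i 0.
Proof.
rewrite (bigD1 ord0) //= min_rate_star0 eqxx; congr (_ + _).
by apply: eq_bigr => i /= i0; rewrite min_rate_star0 (negbTE i0).
Qed.

Section ConnectedGraph.

Variable T : {set {set 'I_n.+2}}.
Hypothesis T_connected : forall x y : 'I_n.+2, connect (adj T) x y.

Definition slack (i : 'I_n.+2) : R := phi gamma i 0 - min_rate T i.

Lemma exists_nbr (i : 'I_n.+2) : exists j, j \in nbrs T i.
Proof.
pose k : 'I_n.+2 := if i == ord0 then ord_max else ord0.
have ki : k != i by rewrite /k; case: (eqVneq i ord0) => [-> | i0] //; rewrite eq_sym.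
case/connectP: (T_connected i k) => [[|y p] /= iyp k_last]; first by rewrite k_last eqxx in ki.
by exists y; rewrite in_nbrs; case/andP: iyp.
Qed.

Lemma slack_ge0 i : 0 <= slack i.
Proof.
have [j ij] := exists_nbr i.
have := minR_le (fun j => phi gamma i j) ij.
have : phi gamma i j <= phi gamma i 0 := phi_le i ord0 j (gamma_sorted (leq0n j) (ltn_ord j)).
by rewrite /slack /min_rate; lra.
Qed.

Lemma phi0_sub_le_slack x p : path (adj T) x p -> last x p = ord_max ->
  phi gamma 0 x - phi gamma 0 n.+1 <= \big[Rplus/0]_(i <- x :: p) slack i.
Proof.
elim: p x => [|y p IHp] x /= => [_ -> | /andP [xy yp] p_last].
  by rewrite big_seq1; have := slack_ge0 ord_max; rewrite /=; lra.
rewrite big_cons; have := IHp y yp p_last.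
have y_nbr : y \in nbrs T x by rewrite in_nbrs.
have := minR_le (fun j => phi gamma x j) y_nbr.
by have := phi_exchange x y; rewrite /slack /min_rate; lra.
Qed.

Lemma min_rate0_le : min_rate T ord0 <=
  phi gamma 0 n.+1 + \big[Rplus/0]_(i : 'I_n.+2 | i != ord0) slack i.
Proof.
case/connectP: (T_connected ord0 ord_max) => p /shortenP [[|w q] // path_wq uniq_wq _ q_last].
case/andP: path_wq => ord0w wq; case/andP: uniq_wq => ord0_notin_wq uniq_wq.
have wq_neq0 : {subset w :: q <= predC1 ord0}.
  by move=> i i_wq; apply: contraNneq ord0_notin_wq => <-.
have slack_path_le : \big[Rplus/0]_(i <- w :: q) slack i <=
                     \big[Rplus/0]_(i : 'I_n.+2 | i != ord0) slack i :=
  sum_uniq_le_sum (l := w :: q) slack uniq_wq wq_neq0 (fun i _ => slack_ge0 i).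
have := Rle_trans _ _ _ (phi0_sub_le_slack w q wq (esym q_last)) slack_path_le.
have w_nbr : w \in nbrs T ord0 by rewrite in_nbrs.
have : min_rate T ord0 <= phi gamma 0 w := minR_le _ w_nbr.
lra.
Qed.

Lemma sum_min_rate_le :
  \big[Rplus/0]_i min_rate T i <= \big[Rplus/0]_i min_rate (star0 n.+2) i.
Proof.
rewrite sum_min_rate_star0 (bigD1 ord0) //=.
have -> : \big[Rplus/0]_(i : 'I_n.+2 | i != ord0) phi gamma i 0 =
          \big[Rplus/0]_(i : 'I_n.+2 | i != ord0) slack i +
          \big[Rplus/0]_(i : 'I_n.+2 | i != ord0) min_rate T i.
  by rewrite -big_split; apply: eq_bigr => i _; rewrite /slack /=; ring.
by rewrite -Rplus_assoc; apply: Rplus_le_compat_r; exact: min_rate0_le.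
Qed.

End ConnectedGraph.

Lemma sum_min_rate_star0_log2 :
  \big[Rplus/0]_i min_rate (star0 n.+2) i =
  log2 ((gamma 0%N + gamma 0%N / (gamma 0%N + gamma n.+1)) *
        \big[Rmult/1]_(1 <= i < n.+2) (gamma i + gamma i / (gamma i + gamma 0%N))).
Proof.
have g0 := gamma_gt0 (ltn0Sn n.+1).
have psi_gt0_tail : {in index_iota 1 n.+2, forall i,
    0 < gamma i + gamma i / (gamma i + gamma 0%N)}.
  by move=> i; rewrite mem_index_iota => /andP [_ /gamma_gt0 /psi_gt0]; apply.
rewrite sum_min_rate_star0 log2_mult; last 2 first.
- exact: psi_gt0 (gamma_gt0 (ltnSn _)).
- exact: prod_gt0.
rewrite log2_prod // big_add1 big_mkord big_mkcond big_ord_recl /= Rplus_0_l.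
by congr (_ + _); apply: eq_bigr.
Qed.

End Optimality.

Theorem theorem3 (N : nat) (gamma : nat -> R)
  (hN : (2 <= N)%nat)
  (hpos : forall i : nat, (i < N)%nat -> 0 < gamma i)
  (hsort : forall i j : nat, (i <= j)%nat -> (j < N)%nat -> gamma i <= gamma j)
  (hcond : forall i j : nat, (i < N)%nat -> (j < N)%nat -> i <> j ->
             gamma i + gamma i / (gamma i + gamma j) >= 1) :
  sum_rate_optimal gamma (star0 N) /\
  sum_rate gamma (star0 N) =
    / (2 * INR (N.-1)) *
    log2 ((gamma 0%nat + gamma 0%nat / (gamma 0%nat + gamma N.-1)) *
          \big[Rmult/1]_(1 <= i < N) (gamma i + gamma i / (gamma i + gamma 0%nat))).
Proof.
(* The exchange inequality does not need the condition [hcond]. *)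
case: N hN hpos hsort {hcond} => [|[|n]] // _ hpos hsort.
have scale_ge0 : 0 <= / (2 * INR n.+1).
  by apply/Rlt_le/Rinv_0_lt_compat/Rmult_lt_0_compat; [lra | apply: lt_0_INR; lia].
split; last by rewrite /sum_rate -(sum_min_rate_star0_log2 _ _ hpos hsort).
split; first exact: star0_spanning_tree.
move=> T [_ [_ T_connected]]; apply: Rmult_le_compat_l scale_ge0 _.
exact: sum_min_rate_le.
Qed.
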